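(* Let $(P_1,e_1),\dots,(P_\ell,e_\ell)$ be friendly tree patterns and let $n\ge 0$. Then Algorithm S, applied to the set $\mathcal{L}_n=\mathcal{T}_n((P_1,e_1),\dots,(P_\ell,e_\ell))$ and initialized with the right path $T_0\in\mathcal{T}_n$ (the tree in which no vertex has a left child), visits every binary tree from $\mathcal{T}_n((P_1,e_1),\dots,(P_\ell,e_\ell))$ exactly once.
   Context: For $n\ge 0$, $\mathcal{T}_n$ is the set of binary trees with $n$ vertices, labeled $1,\dots,n$ by the search tree property (left-subtree vertices of $i$ are smaller than $i$, right-subtree vertices larger). For a vertex $i$: $c_L(i),c_R(i),p(i)$ are its left child, right child, parent ($\varepsilon$ if nonexistent); $r(T)$ is the root; $T(i)$, $L(i)$, $R(i)$ are the subtrees rooted at $i$, $c_L(i)$, $c_R(i)$. $B_R(i)=\{i,c_R(i),c_R^2(i),\dots\}$ is the vertex set of the right branch starting at $i$, and $B_R^-(i)$ is $B_R(i)$ minus its last vertex. A tree pattern is $(P,e)$ with $P\in\mathcal{T}_k$, $e\colon[k]\setminus\{r(P)\}\to\{0,1\}$. $T\in\mathcal{T}_n$ contains $(P,e)$ if there is an injection $f\colon[k]\to[n]$ such that for every non-root $i$ of $P$: if $e(i)=1$, $f(i)$ is the left (resp. right) child of $f(p(i))$ when $i$ is the left (resp. right) child of $p(i)$; if $e(i)=0$, $f(i)\in L(f(p(i)))$ (resp. $R(f(p(i)))$) when $i$ is the left (resp. right) child of $p(i)$. Otherwise $T$ avoids it. $\mathcal{T}_n((P_1,e_1),\dots,(P_\ell,e_\ell))$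 is the set of trees in $\mathcal{T}_n$ avoiding all $(P_j,e_j)$. A tree pattern $(P,e)$, $P\in\mathcal{T}_k$, is friendly if: (i) $p(k)\neq\varepsilon$ and $c_L(k)\neq\varepsilon$ (the largest vertex $k$ is neither the root nor a leaf); (ii) $e(j)=0$ for every $j\in B_R^-(r(P))\setminus\{r(P)\}$; (iii) if $e(k)=1$ then $e(c_L(k))=0$. Rotations: for a vertex $j$ with $p(j)\ne\varepsilon$ and $j=c_R(p(j))$, set $i=p(j)$, $Y=L(j)$; the up-rotation of $j$ makes $j$ the child of $p(i)$ in place of $i$ (if $p(i)\ne\varepsilon$), makes $i$ the left child of $j$ and $Y$ the right subtree of $i$. The down-rotation of $j$ is its inverse and is defined iff $c_L(j)\ne\varepsilon$. An up-slide (down-slide) of $j$ by $d$ steps is a sequence of $d$ up-rotations (down-rotations) of $j$. For a set $\mathcal{L}_n\subseteq\mathcal{T}_n$, a slide producing a tree in $\mathcal{L}_n$ is minimal if every slide of the same vertex in the same direction by fewer steps produces a tree not in $\mathcal{L}_n$. Algorithm S (on $\mathcal{L}_n$, initial tree $T_0\in\mathcal{L}_n$): S1. Visit $T_0$. S2. Generate an unvisited tree from $\mathcal{L}_n$ by performing a minimal slide of the largest possible vertex in the most recently visited tree; if no such slide exists, or the direction of the slide is ambiguous, terminate; otherwise visit this tree and repeat S2. *)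

From Stdlib Require Import Arith List Relations.
Import ListNotations.

(* Unlabeled binary tree shapes; the labeling 1..n is the in-order labeling
   (this is the unique labeling satisfying the search tree property). *)
Inductive tree : Type := Leaf | Node (l r : tree).

Fixpoint tsize (t : tree) : nat :=
  match t with Leaf => 0 | Node l r => tsize l + tsize r + 1 end.

(* label of the root of subtree t whose vertices are labeled off+1..off+|t| *)
Definition rootlab (off : nat) (t : tree) : option nat :=
  match t with Leaf => None | Node l _ => Some (off + tsize l + 1) end.

(* (parent, child, child_is_left) triples *)
Fixpoint edges (off : nat) (t : tree) : list (nat * nat * bool) :=
  match t with
  | Leaf => []
  | Node l r =>
      let v := off + tsize l + 1 in
      (match rootlab off l with Some a => [(v, a, true)] | None => [] end) ++
      (match rootlab v r with Some b => [(v, b, false)] | None => [] end) ++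
      edges off l ++ edges v r
  end.

Definition edge (T : tree) (p c : nat) (isleft : bool) : Prop :=
  In (p, c, isleft) (edges 0 T).

Definition child (T : tree) (p c : nat) : Prop := exists b, edge T p c b.

Definition desc (T : tree) : nat -> nat -> Prop := clos_refl_trans nat (child T).

Definition is_root (T : tree) (r : nat) : Prop := rootlab 0 T = Some r.

(* tree pattern (P, e); e is only relevant on the non-root vertices of P *)
Record pattern := Pattern { pat : tree; pe : nat -> bool }.

Definition contains (T : tree) (p : pattern) : Prop :=
  let P := pat p in let k := tsize P in let n := tsize T in
  exists f : nat -> nat,
    (forall i, 1 <= i <= k -> 1 <= f i <= n) /\
    (forall i j, 1 <= i <= k -> 1 <= j <= k -> f i = f j -> i = j) /\
    (forall a c b, edge P a c b ->
       if pe p c then edge T (f a) (f c) b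
       else exists d, edge T (f a) d b /\ desc T d (f c)).

Definition avoids (T : tree) (p : pattern) : Prop := ~ contains T p.

Definition friendly (p : pattern) : Prop :=
  let P := pat p in let k := tsize P in
  (* (i) k is neither the root nor a leaf *)
  ((exists a, child P a k) /\ (exists c, edge P k c true)) /\
  (forall r j, is_root P r ->
     clos_refl_trans nat (fun a b => edge P a b false) r j ->
     j <> r -> (exists c, edge P j c false) -> pe p j = false) /\
  (forall c, pe p k = true -> edge P k c true -> pe p c = false).

Definition Ln (pats : list pattern) (n : nat) (T : tree) : Prop :=
  tsize T = n /\ forall p, In p pats -> avoids T p.

Fixpoint right_path (n : nat) : tree :=
  match n with 0 => Leaf | S m => Node Leaf (right_path m) end.

(* up-rotation of vertex j (j must be a right child) *)
Fixpoint rot_up_off (off j : nat) (t : tree) : option tree :=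
  match t with
  | Leaf => None
  | Node l r =>
      let v := off + tsize l + 1 in
      match r with
      | Node Y Z =>
          if Nat.eqb (v + tsize Y + 1) j then Some (Node (Node l Y) Z)
          else if Nat.ltb j v then
            match rot_up_off off j l with Some l' => Some (Node l' r) | None => None end
          else if Nat.ltb v j then
            match rot_up_off v j r with Some r' => Some (Node l r') | None => None end
          else None
      | Leaf =>
          if Nat.ltb j v then
            match rot_up_off off j l with Some l' => Some (Node l' r) | None => None end
          else None
      end
  end.

(* down-rotation of vertex j (defined iff j has a left child) *)
Fixpoint rot_down_off (off j : nat) (t : tree) : option tree :=
  match t with
  | Leaf => None
  | Node l r =>
      let v := off + tsize l + 1 in
      if Nat.eqb j v then
        match l with Node A Y => Some (Node A (Node Y r)) | Leaf => None end
      else if Nat.ltb j v then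
        match rot_down_off off j l with Some l' => Some (Node l' r) | None => None end
      else
        match rot_down_off v j r with Some r' => Some (Node l r') | None => None end
  end.

Definition rot_up (j : nat) (T : tree) : option tree := rot_up_off 0 j T.
Definition rot_down (j : nat) (T : tree) : option tree := rot_down_off 0 j T.

Fixpoint iter_opt (g : tree -> option tree) (d : nat) (T : tree) : option tree :=
  match d with
  | 0 => Some T
  | S d' => match g T with Some T' => iter_opt g d' T' | None => None end
  end.

Definition slide (up : bool) (j d : nat) (T : tree) : option tree :=
  iter_opt (if up then rot_up j else rot_down j) d T.

Definition min_slide (L : tree -> Prop) (T : tree) (j : nat) (up : bool) (T' : tree) : Prop :=
  exists d, 1 <= d /\ slide up j d T = Some T' /\ L T' /\
    forall d' T'', 1 <= d' < d -> slide up j d' T = Some T'' -> ~ L T''.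

Definition candidate (L : tree -> Prop) (vis : list tree) (cur : tree)
    (j : nat) (up : bool) (T' : tree) : Prop :=
  min_slide L cur j up T' /\ ~ In T' vis.

(* step S2: the tree T' generated from cur; no such T' means termination
   (no candidate, or ambiguous direction for the largest vertex) *)
Definition S_step (L : tree -> Prop) (cur : tree) (vis : list tree) (T' : tree) : Prop :=
  exists j up,
    candidate L vis cur j up T' /\
    (forall j' up' T'', candidate L vis cur j' up' T'' -> j' <= j) /\
    (forall up' T'', candidate L vis cur j up' T'' -> up' = up).

(* runs of Algorithm S; the list of visited trees is stored most recent first *)
Inductive S_run (L : tree -> Prop) (T0 : tree) : list tree -> Prop :=
  | run_init : S_run L T0 [T0]
  | run_step : forall T vis T',
      S_run L T0 (T :: vis) -> S_step L T (T :: vis) T' ->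
      S_run L T0 (T' :: T :: vis).

Definition S_complete (L : tree -> Prop) (T0 : tree) (vis : list tree) : Prop :=
  S_run L T0 vis /\
  exists T rest, vis = T :: rest /\ forall T', ~ S_step L T vis T'.

From Stdlib Require Import Arith List Relations Lia Sorting.Sorted Classical ClassicalEpsilon.
Import ListNotations.

(* Trees avoiding friendly patterns form a zigzag language: deleting the
   largest vertex n keeps a tree in the class, and inserting n as the new root,
   or as the last vertex of the right branch, of a tree of the class with n - 1
   vertices stays in the class.  For every zigzag language, the run of
   Algorithm S from the right path is obtained from the run for n - 1: each
   tree X is replaced by the trees of the class obtained by inserting n along
   the right branch of X, sweeping in alternating directions.  Inside a sweep,
   n is the largest vertex that can move and its minimal slide reaches the next
   position of the sweep.  At the end of a sweep n cannot reach an unvisited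
   tree; as n sits at the root or at the bottom of the right branch, rotations
   of smaller vertices commute with its insertion, so the algorithm performs
   the step it performs on trees with n - 1 vertices. *)

(** * Inserting and removing the largest vertex *)

Fixpoint right_depth (X : tree) : nat :=
  match X with Leaf => 0 | Node _ r => S (right_depth r) end.

(* [insert_max i X] walks [i] steps down the right branch of [X] and puts a new
   largest vertex there, the subtree found at that place becoming its left
   subtree; [i] ranges over [0 .. right_depth X]. *)
Fixpoint insert_max (i : nat) (X : tree) : tree :=
  match X with
  | Leaf => Node Leaf Leaf
  | Node l r => match i with 0 => Node X Leaf | S i' => Node l (insert_max i' r) end
  end.

Fixpoint insert_bottom (X : tree) : tree :=
  match X with Leaf => Node Leaf Leaf | Node l r => Node l (insert_bottom r) end.

Fixpoint remove_max (T : tree) : tree :=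
  match T with Leaf => Leaf | Node l Leaf => l | Node l r => Node l (remove_max r) end.

Fixpoint max_depth (T : tree) : nat :=
  match T with Leaf => 0 | Node _ Leaf => 0 | Node _ r => S (max_depth r) end.

Lemma insert_max_0 X : insert_max 0 X = Node X Leaf.
Proof. destruct X; reflexivity. Qed.

Lemma insert_bottomE X : insert_bottom X = insert_max (right_depth X) X.
Proof. induction X as [|l _ r IH]; simpl; [reflexivity|now rewrite IH]. Qed.

Lemma insert_max_neq_Leaf i X : insert_max i X <> Leaf.
Proof. destruct X, i; discriminate. Qed.

Lemma tree_eq_Leaf_dec t : {t = Leaf} + {t <> Leaf}.
Proof. destruct t; [left|right]; congruence. Qed.

Lemma remove_max_Node l r : r <> Leaf -> remove_max (Node l r) = Node l (remove_max r).
Proof. destruct r; [congruence|reflexivity]. Qed.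

Lemma max_depth_Node l r : r <> Leaf -> max_depth (Node l r) = S (max_depth r).
Proof. destruct r; [congruence|reflexivity]. Qed.

Lemma remove_insert_max i X : remove_max (insert_max i X) = X.
Proof.
  revert i; induction X as [|l _ r IH]; intros [|i]; try reflexivity.
  change (remove_max (Node l (insert_max i r)) = Node l r).
  rewrite remove_max_Node, IH by apply insert_max_neq_Leaf. reflexivity.
Qed.

Lemma max_depth_insert_max i X : i <= right_depth X -> max_depth (insert_max i X) = i.
Proof.
  revert i; induction X as [|l _ r IH]; intros [|i] Hi; simpl in Hi; try reflexivity; [lia|].
  change (max_depth (Node l (insert_max i r)) = S i).
  rewrite max_depth_Node, IH by (apply insert_max_neq_Leaf || lia). reflexivity.
Qed.

Lemma insert_remove_max T : T <> Leaf ->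
  insert_max (max_depth T) (remove_max T) = T /\ max_depth T <= right_depth (remove_max T).
Proof.
  induction T as [|l _ r IH]; intros NL; [congruence|].
  destruct (tree_eq_Leaf_dec r) as [->|Nr].
  - cbn [remove_max max_depth right_depth]. rewrite insert_max_0. split; [reflexivity|lia].
  - destruct (IH Nr) as [E Hd].
    rewrite remove_max_Node, max_depth_Node by exact Nr. simpl. rewrite E. split; [reflexivity|lia].
Qed.

Lemma tsize_insert_max i X : tsize (insert_max i X) = S (tsize X).
Proof.
  revert i; induction X as [|l _ r IH]; intros [|i]; simpl; try lia.
  change (tsize l + tsize (insert_max i r) + 1 = S (tsize l + tsize r + 1)). rewrite IH. lia.
Qed.

Lemma insert_max_inj i X j Y : i <= right_depth X -> j <= right_depth Y ->
  insert_max i X = insert_max j Y -> i = j /\ X = Y.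
Proof.
  intros Hi Hj E.
  assert (X = Y) as <- by (rewrite <- (remove_insert_max i X), <- (remove_insert_max j Y), E; auto).
  split; [|reflexivity].
  rewrite <- (max_depth_insert_max i X), <- (max_depth_insert_max j X), E; auto.
Qed.

Lemma insert_bottom_right_path m : insert_bottom (right_path m) = right_path (S m).
Proof. induction m as [|m IH]; simpl; [reflexivity|now rewrite IH]. Qed.

(** * Rotations and slides *)

Ltac nat_cases :=
  repeat match goal with
  | |- context [Nat.eqb ?a ?b] => destruct (Nat.eqb_spec a b)
  | |- context [Nat.ltb ?a ?b] => destruct (Nat.ltb_spec a b)
  | H : context [Nat.eqb ?a ?b] |- _ => destruct (Nat.eqb_spec a b)
  | H : context [Nat.ltb ?a ?b] |- _ => destruct (Nat.ltb_spec a b)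
  end.

Ltac destruct_some H :=
  match type of H with
  | match ?e with Some _ => _ | None => _ end = Some _ =>
      let E := fresh "E" in let u := fresh "u" in
      destruct e as [u|] eqn:E; [|discriminate]; inversion H; subst
  end.

Lemma rot_up_off_Node off j l r : rot_up_off off j (Node l r) =
  match r with
  | Node Y Z =>
      if Nat.eqb (off + tsize l + 1 + tsize Y + 1) j then Some (Node (Node l Y) Z)
      else if Nat.ltb j (off + tsize l + 1) then
        match rot_up_off off j l with Some l' => Some (Node l' r) | None => None end
      else if Nat.ltb (off + tsize l + 1) j then
        match rot_up_off (off + tsize l + 1) j r with Some r' => Some (Node l r') | None => None end
      else None
  | Leaf =>
      if Nat.ltb j (off + tsize l + 1) then
        match rot_up_off off j l with Some l' => Some (Node l' r) | None => None end
      else None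
  end.
Proof. reflexivity. Qed.

Lemma rot_down_off_Node off j l r : rot_down_off off j (Node l r) =
  if Nat.eqb j (off + tsize l + 1) then
    match l with Node A Y => Some (Node A (Node Y r)) | Leaf => None end
  else if Nat.ltb j (off + tsize l + 1) then
    match rot_down_off off j l with Some l' => Some (Node l' r) | None => None end
  else
    match rot_down_off (off + tsize l + 1) j r with Some r' => Some (Node l r') | None => None end.
Proof. reflexivity. Qed.

Lemma rot_up_off_spec off j t t' : rot_up_off off j t = Some t' ->
  tsize t' = tsize t /\ off < j <= off + tsize t.
Proof.
  revert off t'; induction t as [|l IHl r IHr]; intros off t' H; [discriminate|].
  rewrite rot_up_off_Node in H.
  destruct r as [|Y Z]; nat_cases; try discriminate; try (inversion H; subst; simpl; lia).
  all: destruct_some H; simpl.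
  all: first [destruct (IHl _ _ E) | destruct (IHr _ _ E)]; simpl in *; lia.
Qed.

Lemma rot_down_off_spec off j t t' : rot_down_off off j t = Some t' ->
  tsize t' = tsize t /\ off < j <= off + tsize t.
Proof.
  revert off t'; induction t as [|l IHl r IHr]; intros off t' H; [discriminate|].
  rewrite rot_down_off_Node in H.
  nat_cases; try discriminate; try (destruct l; inversion H; subst; simpl; lia).
  all: destruct_some H; simpl.
  all: first [destruct (IHl _ _ E) | destruct (IHr _ _ E)]; simpl in *; lia.
Qed.

Definition rot (up : bool) (j : nat) : tree -> option tree :=
  if up then rot_up j else rot_down j.

Lemma slide_S up j d T :
  slide up j (S d) T = match rot up j T with Some T' => slide up j d T' | None => None end.
Proof. destruct up; reflexivity. Qed.

Lemma rot_spec up j T T' : rot up j T = Some T' -> tsize T' = tsize T /\ 0 < j <= tsize T.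
Proof. destruct up; [apply rot_up_off_spec | apply rot_down_off_spec]. Qed.

Lemma slide_range up j d T T' : 1 <= d -> slide up j d T = Some T' -> 0 < j <= tsize T.
Proof.
  intros Hd H. destruct d as [|d]; [lia|]. rewrite slide_S in H.
  destruct (rot up j T) eqn:E; [|discriminate]. eapply rot_spec; eauto.
Qed.

Lemma min_slide_unique L T j up T1 T2 :
  min_slide L T j up T1 -> min_slide L T j up T2 -> T1 = T2.
Proof.
  intros [d1 [H1 [S1 [L1 M1]]]] [d2 [H2 [S2 [L2 M2]]]].
  destruct (lt_eq_lt_dec d1 d2) as [[lt|<-]|lt].
  - exfalso. apply (M2 d1 T1); auto.
  - congruence.
  - exfalso. apply (M1 d2 T2); auto.
Qed.

Lemma rot_up_insert_max X off i : i < right_depth X ->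
  rot_up_off off (off + tsize X + 1) (insert_max (S i) X) = Some (insert_max i X).
Proof.
  revert off i; induction X as [|l _ r IH]; intros off i Hi; simpl in Hi; [lia|].
  destruct i as [|i].
  - change (insert_max 1 (Node l r)) with (Node l (insert_max 0 r)). rewrite insert_max_0.
    rewrite rot_up_off_Node. nat_cases; try (simpl in *; lia). reflexivity.
  - destruct r as [|rl rr]; simpl in Hi; [lia|].
    change (insert_max (S (S i)) (Node l (Node rl rr)))
      with (Node l (Node rl (insert_max i rr))).
    rewrite rot_up_off_Node. nat_cases; try (simpl in *; lia).
    replace (off + tsize (Node l (Node rl rr)) + 1)
      with ((off + tsize l + 1) + tsize (Node rl rr) + 1) by (simpl; lia).
    change (Node rl (insert_max i rr)) with (insert_max (S i) (Node rl rr)).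
    rewrite IH by (simpl; lia). reflexivity.
Qed.

Lemma rot_up_insert_max_0 X off :
  rot_up_off off (off + tsize X + 1) (insert_max 0 X) = None.
Proof. rewrite insert_max_0. simpl. nat_cases; auto; lia. Qed.

Lemma rot_down_insert_max X off i : i < right_depth X ->
  rot_down_off off (off + tsize X + 1) (insert_max i X) = Some (insert_max (S i) X).
Proof.
  revert off i; induction X as [|l _ r IH]; intros off i Hi; simpl in Hi; [lia|].
  destruct i as [|i].
  - rewrite insert_max_0, rot_down_off_Node. nat_cases; try (simpl in *; lia).
    change (insert_max 1 (Node l r)) with (Node l (insert_max 0 r)). now rewrite insert_max_0.
  - change (insert_max (S i) (Node l r)) with (Node l (insert_max i r)).
    rewrite rot_down_off_Node. nat_cases; try (simpl in *; lia).
    replace (off + tsize (Node l r) + 1) with ((off + tsize l + 1) + tsize r + 1) by (simpl; lia).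
    rewrite IH by lia. reflexivity.
Qed.

Lemma rot_down_insert_bottom X off :
  rot_down_off off (off + tsize X + 1) (insert_max (right_depth X) X) = None.
Proof.
  revert off; induction X as [|l _ r IH]; intros off.
  - simpl. nat_cases; auto; lia.
  - change (insert_max (right_depth (Node l r)) (Node l r))
      with (Node l (insert_max (right_depth r) r)).
    rewrite rot_down_off_Node. nat_cases; try (simpl in *; lia).
    replace (off + tsize (Node l r) + 1) with ((off + tsize l + 1) + tsize r + 1) by (simpl; lia).
    rewrite IH. reflexivity.
Qed.

Lemma slide_up_insert_max X d i : i <= right_depth X ->
  slide true (S (tsize X)) d (insert_max i X) =
  if d <=? i then Some (insert_max (i - d) X) else None.
Proof.
  revert i; induction d as [|d IH]; intros i Hi.
  - simpl. now rewrite Nat.sub_0_r.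
  - rewrite slide_S. unfold rot, rot_up.
    replace (S (tsize X)) with (0 + tsize X + 1) by lia.
    destruct i as [|i].
    + rewrite rot_up_insert_max_0. reflexivity.
    + rewrite rot_up_insert_max by lia. replace (0 + tsize X + 1) with (S (tsize X)) by lia.
      rewrite IH by lia. reflexivity.
Qed.

Lemma slide_down_insert_max X d i : i <= right_depth X ->
  slide false (S (tsize X)) d (insert_max i X) =
  if i + d <=? right_depth X then Some (insert_max (i + d) X) else None.
Proof.
  revert i; induction d as [|d IH]; intros i Hi.
  - rewrite Nat.add_0_r. destruct (Nat.leb_spec i (right_depth X)); [reflexivity|lia].
  - rewrite slide_S. unfold rot, rot_down.
    replace (S (tsize X)) with (0 + tsize X + 1) by lia.
    destruct (Nat.eq_dec i (right_depth X)) as [->|ne].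
    + rewrite rot_down_insert_bottom.
      destruct (Nat.leb_spec (right_depth X + S d) (right_depth X)); [lia|reflexivity].
    + rewrite rot_down_insert_max by lia. replace (0 + tsize X + 1) with (S (tsize X)) by lia.
      rewrite IH by lia. now replace (S i + d) with (i + S d) by lia.
Qed.

Lemma slide_insert_max X up d i T' : i <= right_depth X ->
  slide up (S (tsize X)) d (insert_max i X) = Some T' ->
  exists k, k <= right_depth X /\ T' = insert_max k X /\ (if up then k + d = i else k = i + d).
Proof.
  intros Hi H. destruct up.
  - rewrite slide_up_insert_max in H by exact Hi.
    destruct (Nat.leb_spec d i); inversion H; subst. exists (i - d). repeat split; lia.
  - rewrite slide_down_insert_max in H by exact Hi.
    destruct (Nat.leb_spec (i + d) (right_depth X)); inversion H; subst. now exists (i + d).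
Qed.

Definition commutes_with_rot (ext : tree -> tree) : Prop :=
  forall up j X, j <= tsize X -> rot up j (ext X) = option_map ext (rot up j X).

Lemma rot_up_off_root_insert X off j : j < off + tsize X + 1 ->
  rot_up_off off j (Node X Leaf) = option_map (fun t => Node t Leaf) (rot_up_off off j X).
Proof. intros H. simpl. nat_cases; try lia. now destruct (rot_up_off off j X). Qed.

Lemma rot_down_off_root_insert X off j : j < off + tsize X + 1 ->
  rot_down_off off j (Node X Leaf) = option_map (fun t => Node t Leaf) (rot_down_off off j X).
Proof. intros H. simpl. nat_cases; try lia. now destruct (rot_down_off off j X). Qed.

Lemma rot_up_off_insert_bottom X off j : j < off + tsize X + 1 ->
  rot_up_off off j (insert_bottom X) = option_map insert_bottom (rot_up_off off j X).
Proof.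
  revert off; induction X as [|l _ r IH]; intros off H.
  - simpl. now nat_cases.
  - change (insert_bottom (Node l r)) with (Node l (insert_bottom r)).
    destruct r as [|Y Z].
    + simpl. nat_cases; simpl in *; try lia; try reflexivity.
      now destruct (rot_up_off off j l).
    + change (insert_bottom (Node Y Z)) with (Node Y (insert_bottom Z)).
      rewrite !(rot_up_off_Node off j l). nat_cases; simpl in H; try lia; try reflexivity.
      * now destruct (rot_up_off off j l).
      * change (Node Y (insert_bottom Z)) with (insert_bottom (Node Y Z)).
        rewrite IH by (simpl; lia). now destruct (rot_up_off (off + tsize l + 1) j (Node Y Z)).
Qed.

Lemma rot_down_off_insert_bottom X off j : j < off + tsize X + 1 ->
  rot_down_off off j (insert_bottom X) = option_map insert_bottom (rot_down_off off j X).
Proof.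
  revert off; induction X as [|l _ r IH]; intros off H.
  - simpl. nat_cases; auto; lia.
  - change (insert_bottom (Node l r)) with (Node l (insert_bottom r)).
    rewrite !(rot_down_off_Node off j l). nat_cases; simpl in H; try lia.
    + now destruct l.
    + now destruct (rot_down_off off j l).
    + rewrite IH by lia. now destruct (rot_down_off (off + tsize l + 1) j r).
Qed.

Lemma root_insert_commutes : commutes_with_rot (fun t => Node t Leaf).
Proof.
  intros [] j X H; unfold rot, rot_up, rot_down;
    [apply rot_up_off_root_insert | apply rot_down_off_root_insert]; lia.
Qed.

Lemma insert_bottom_commutes : commutes_with_rot insert_bottom.
Proof.
  intros [] j X H; unfold rot, rot_up, rot_down;
    [apply rot_up_off_insert_bottom | apply rot_down_off_insert_bottom]; lia.
Qed.

Lemma slide_commutes ext : commutes_with_rot ext -> forall up j d X, j <= tsize X ->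
  slide up j d (ext X) = option_map ext (slide up j d X).
Proof.
  intros C up j d. induction d as [|d IH]; intros X H; [reflexivity|].
  rewrite !slide_S, C by exact H.
  destruct (rot up j X) eqn:E; simpl; [|reflexivity].
  apply IH. now rewrite (proj1 (rot_spec _ _ _ _ E)).
Qed.

(** * Runs of Algorithm S *)

(* Algorithm S started at [T0] visits the trees of [J] in order; a run stores
   its visited trees most recent first, hence [rev A]. *)
Definition generates (L : tree -> Prop) (J : list tree) (T0 : tree) : Prop :=
  NoDup J /\ (forall T, In T J <-> L T) /\ hd_error J = Some T0 /\
  forall A T B, J = A ++ T :: B ->
    forall T', S_step L T (T :: rev A) T' <-> hd_error B = Some T'.

Section Generates.
Variables (L : tree -> Prop) (J : list tree) (T0 : tree).
Hypothesis HJ : generates L J T0.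

Lemma generates_run_prefix A T B : J = A ++ T :: B -> S_run L T0 (T :: rev A).
Proof.
  destruct HJ as [_ [_ [Hhd Hstep]]].
  revert T B; induction A as [|T1 A IH] using rev_ind; intros T B E.
  - rewrite E in Hhd. injection Hhd as ->. constructor.
  - rewrite rev_app_distr. simpl.
    assert (E' : J = A ++ T1 :: T :: B) by (rewrite E, <- app_assoc; reflexivity).
    apply run_step; [eapply IH; eauto|].
    now apply (Hstep A T1 (T :: B) E').
Qed.

Lemma generates_run_inv vis : S_run L T0 vis ->
  exists A T B, J = A ++ T :: B /\ vis = T :: rev A.
Proof.
  destruct HJ as [_ [_ [Hhd Hstep]]].
  induction 1 as [|T vis T' _ IH St].
  - destruct J as [|T1 J']; [discriminate|]. injection Hhd as ->.
    now exists [], T0, J'.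
  - destruct IH as [A [T1 [B [E1 E2]]]]. injection E2 as <- ->.
    apply (Hstep A T B E1) in St. destruct B as [|T2 B']; [discriminate|].
    injection St as ->. exists (A ++ [T]), T', B'. split.
    + now rewrite E1, <- app_assoc.
    + now rewrite rev_app_distr.
Qed.

Lemma generates_S_complete :
  (exists vis, S_complete L T0 vis) /\
  (forall vis, S_complete L T0 vis -> NoDup vis /\ forall T, In T vis <-> L T).
Proof.
  pose proof HJ as [HN [HI [Hhd Hstep]]]. split.
  - assert (NE : J <> []) by (intros E; rewrite E in Hhd; discriminate).
    destruct (exists_last NE) as [A [T HA]].
    exists (T :: rev A). split; [exact (generates_run_prefix A T [] HA)|].
    exists T, (rev A). split; [reflexivity|]. intros T' St.
    now apply (Hstep A T [] HA) in St.
  - intros vis [R [T [rest [E NS]]]].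
    destruct (generates_run_inv vis R) as [A [T1 [B [E1 E2]]]].
    rewrite E2 in E. injection E as <- <-. subst vis.
    destruct B as [|T2 B'].
    + rewrite <- rev_unit, <- E1. split; [now apply NoDup_rev|].
      intros X. now rewrite <- in_rev.
    + exfalso. apply (NS T2). now apply (Hstep A T1 (T2 :: B') E1).
Qed.

End Generates.

Lemma S_step_of_max_candidate L T vis N d T2 :
  candidate L vis T N d T2 ->
  (forall j up T'', candidate L vis T j up T'' -> j <= N) ->
  (forall up T'', candidate L vis T N up T'' -> up = d) ->
  forall T', S_step L T vis T' <-> T' = T2.
Proof.
  intros C Cmax Cdir T'. split.
  - intros [j [up [Cj [Mj Uj]]]].
    assert (j = N) as -> by (apply Nat.le_antisymm; [eapply Cmax | eapply Mj]; eauto).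
    assert (up = d) as -> by (eapply Cdir; eauto).
    exact (min_slide_unique _ _ _ _ _ _ (proj1 Cj) (proj1 C)).
  - intros ->. now exists N, d.
Qed.

Section Transfer.
Variables (L L' : tree -> Prop) (ext : tree -> tree).
Hypothesis ext_commutes : commutes_with_rot ext.
Hypothesis L_ext : forall Y, L (ext Y) <-> L' Y.

Lemma min_slide_ext X j up T'' : j <= tsize X ->
  min_slide L (ext X) j up T'' <-> exists Y, T'' = ext Y /\ min_slide L' X j up Y.
Proof.
  intros Hj. pose proof (slide_commutes ext ext_commutes up j) as SC. split.
  - intros [d [Hd [Sd [LT M]]]]. rewrite SC in Sd by exact Hj.
    destruct (slide up j d X) as [Y|] eqn:E; inversion Sd; subst.
    exists Y; split; [reflexivity|]. exists d; repeat split; auto.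
    + now apply L_ext.
    + intros d' Y' Hd' Sd' LY'. apply (M d' (ext Y') Hd').
      * now rewrite SC, Sd'.
      * now apply L_ext.
  - intros [Y [-> [d [Hd [Sd [LY M]]]]]]. exists d; repeat split; auto.
    + now rewrite SC, Sd.
    + now apply L_ext.
    + intros d' T3 Hd' Sd' LT3. rewrite SC in Sd' by exact Hj.
      destruct (slide up j d' X) as [Y'|] eqn:E; inversion Sd'; subst.
      apply (M d' Y' Hd' E). now apply L_ext.
Qed.

Lemma S_step_ext X vis vis' N :
  (forall Y, In (ext Y) vis <-> In Y vis') ->
  tsize (ext X) = N -> N = S (tsize X) ->
  (forall up T'', ~ candidate L vis (ext X) N up T'') ->
  forall T', S_step L (ext X) vis T' <-> exists Y, T' = ext Y /\ S_step L' X vis' Y.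
Proof.
  intros Hvis HsN HN NoN.
  assert (Cext : forall j up T'', j < N -> candidate L vis (ext X) j up T'' <->
            exists Y, T'' = ext Y /\ candidate L' vis' X j up Y).
  { intros j up T'' Hj. unfold candidate. rewrite min_slide_ext by lia. split.
    - intros [[Y [-> M]] NI]. exists Y. split; [reflexivity|].
      split; [exact M|]. now rewrite <- Hvis.
    - intros [Y [-> [M NI]]]. split; [now exists Y|]. now rewrite Hvis. }
  assert (Clt : forall j up T'', candidate L vis (ext X) j up T'' -> j < N).
  { intros j up T'' Cj. destruct (Nat.eq_dec j N) as [->|ne].
    - exfalso; eapply NoN; eauto.
    - destruct Cj as [[d [Hd [Sd _]]] _]. apply slide_range in Sd; lia. }
  assert (Clt' : forall j up Y, candidate L' vis' X j up Y -> j < N).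
  { intros j up Y [[d [Hd [Sd _]]] _]. apply slide_range in Sd; lia. }
  intros T'. split.
  - intros [j [up [Cj [Mj Uj]]]]. pose proof (Clt _ _ _ Cj) as Hj.
    apply Cext in Cj as [Y [-> Cj]]; [|exact Hj]. exists Y. split; [reflexivity|].
    exists j, up. split; [exact Cj|]. split.
    + intros j' up' Y'' C'. eapply Mj, Cext; eauto.
    + intros up' Y'' C'. eapply Uj, Cext; eauto.
  - intros [Y [-> [j [up [Cj [Mj Uj]]]]]]. pose proof (Clt' _ _ _ Cj) as Hj.
    exists j, up. split; [apply Cext; eauto|]. split.
    + intros j' up' T'' C'. pose proof (Clt _ _ _ C') as Hj'.
      apply Cext in C' as [Y' [-> C']]; [|exact Hj']. eapply Mj; eauto.
    + intros up' T'' C'. apply Cext in C' as [Y' [-> C']]; [|exact Hj]. eapply Uj; eauto.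
Qed.

End Transfer.

(** * Sweeps *)

Section StronglySortedLists.
Variables (A : Type) (R : A -> A -> Prop).

Lemma StronglySorted_filter f l : StronglySorted R l -> StronglySorted R (filter f l).
Proof.
  induction 1 as [|a l _ IH Ha]; simpl; [constructor|].
  destruct (f a); [|exact IH]. constructor; [exact IH|].
  rewrite Forall_forall in *. intros x Hx. apply filter_In in Hx. now apply Ha.
Qed.

Lemma StronglySorted_app_cons l1 x l2 : StronglySorted R (l1 ++ x :: l2) ->
  (forall y, In y l1 -> R y x) /\ (forall y, In y l2 -> R x y).
Proof.
  induction l1 as [|a l1 IH]; simpl; intros H; apply StronglySorted_inv in H as [H1 H2];
    rewrite Forall_forall in H2.
  - split; [intros _ []|exact H2].
  - destruct (IH H1) as [H3 H4]. split; [|exact H4].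
    intros y [<-|Hy]; [apply H2, in_or_app; simpl; auto|auto].
Qed.

Hypothesis R_irrefl : forall a, ~ R a a.
Hypothesis R_trans : forall a b c, R a b -> R b c -> R a c.

Lemma StronglySorted_NoDup l : StronglySorted R l -> NoDup l.
Proof.
  induction 1 as [|a l _ IH Ha]; constructor; [|exact IH].
  intros Hin. rewrite Forall_forall in Ha. exact (R_irrefl a (Ha a Hin)).
Qed.

Lemma StronglySorted_split l l1 x l2 : StronglySorted R l -> l = l1 ++ x :: l2 ->
  (forall y, In y l1 <-> In y l /\ R y x) /\ (forall y, In y l2 <-> In y l /\ R x y).
Proof.
  intros SS ->. destruct (StronglySorted_app_cons _ _ _ SS) as [H1 H2].
  split; intros y; rewrite in_app_iff; simpl; split.
  - intros Hy; auto.
  - intros [[Hy|[<-|Hy]] Ry]; [exact Hy|exfalso; exact (R_irrefl _ Ry)|].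
    exfalso. exact (R_irrefl _ (R_trans _ _ _ (H2 y Hy) Ry)).
  - intros Hy; auto.
  - intros [[Hy|[<-|Hy]] Ry]; [|exfalso; exact (R_irrefl _ Ry)|exact Hy].
    exfalso. exact (R_irrefl _ (R_trans _ _ _ (H1 y Hy) Ry)).
Qed.

Lemma StronglySorted_consecutive l l1 x x' l3 : StronglySorted R l ->
  l = l1 ++ x :: x' :: l3 -> R x x' /\ forall y, R x y -> R y x' -> ~ In y l.
Proof.
  intros SS E. destruct (StronglySorted_split _ _ _ _ SS E) as [H1 H2].
  split; [exact (proj2 (proj1 (H2 x') (or_introl eq_refl)))|].
  assert (E' : l = (l1 ++ [x]) ++ x' :: l3) by (rewrite E, <- app_assoc; reflexivity).
  destruct (StronglySorted_split _ _ _ _ SS E') as [H3 _].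
  intros y Rxy Ryx' Hy.
  assert (Hl : In y (l1 ++ [x])) by (apply H3; auto).
  apply in_app_or in Hl as [Hl|[<-|[]]]; [|exact (R_irrefl _ Rxy)].
  apply (R_irrefl x), (R_trans _ y); [exact Rxy|]. now apply H1.
Qed.

End StronglySortedLists.

(* The direction flag of a sweep is the [up] flag of the slides performing it:
   an up-sweep visits the insertion positions by decreasing depth. *)
Definition precedes (up : bool) (a b : nat) : Prop := if up then b < a else a < b.

Lemma precedes_irrefl up a : ~ precedes up a a.
Proof. destruct up; simpl; lia. Qed.

Lemma precedes_trans up a b c : precedes up a b -> precedes up b c -> precedes up a c.
Proof. destruct up; simpl; lia. Qed.

Fixpoint downfrom (r : nat) : list nat :=
  match r with 0 => [0] | S r' => r :: downfrom r' end.

Definition positions (up : bool) (r : nat) : list nat :=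
  if up then downfrom r else seq 0 (S r).

Lemma downfrom_In r k : In k (downfrom r) <-> k <= r.
Proof.
  induction r as [|r IH]; simpl; [split; [intros [<-|[]]; lia|left; lia]|].
  rewrite IH. lia.
Qed.

Lemma positions_In up r k : In k (positions up r) <-> k <= r.
Proof. destruct up; simpl; [apply downfrom_In|rewrite in_seq; lia]. Qed.

Lemma seq_sorted c a : StronglySorted (precedes false) (seq a c).
Proof.
  revert a; induction c as [|c IH]; intros a; simpl; constructor; [apply IH|].
  apply Forall_forall. intros x Hx. apply in_seq in Hx. simpl. lia.
Qed.

Lemma positions_sorted up r : StronglySorted (precedes up) (positions up r).
Proof.
  destruct up; simpl; [|apply (seq_sorted (S r) 0)].
  induction r as [|r IH]; simpl; constructor; auto using SSorted_nil.
  apply Forall_forall. intros x Hx. apply downfrom_In in Hx. simpl. lia.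
Qed.

Definition decide (P : Prop) : bool := if excluded_middle_informative P then true else false.

Lemma decide_true P : decide P = true <-> P.
Proof. unfold decide. destruct (excluded_middle_informative P); split; auto; discriminate. Qed.

Definition sweep_positions (P : tree -> Prop) (up : bool) (X : tree) : list nat :=
  filter (fun i => decide (P (insert_max i X))) (positions up (right_depth X)).

Definition sweep (P : tree -> Prop) (up : bool) (X : tree) : list tree :=
  map (fun i => insert_max i X) (sweep_positions P up X).

Fixpoint zigzag (P : tree -> Prop) (up : bool) (Xs : list tree) : list tree :=
  match Xs with [] => [] | X :: Xs' => sweep P up X ++ zigzag P (negb up) Xs' end.

Fixpoint zigzag_list (L : nat -> tree -> Prop) (m : nat) : list tree :=
  match m with 0 => [Leaf] | S m' => zigzag (L (S m')) true (zigzag_list L m') end.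

Definition sweep_end (up : bool) (X : tree) : nat := if up then 0 else right_depth X.

Definition insert_end (up : bool) (X : tree) : tree := insert_max (sweep_end up X) X.

Lemma sweep_end_le up X : sweep_end up X <= right_depth X.
Proof. destruct up; simpl; lia. Qed.

Lemma insert_end_inj up Y Y' : insert_end up Y = insert_end up Y' -> Y = Y'.
Proof. intros E. now apply insert_max_inj in E; auto using sweep_end_le. Qed.

Lemma insert_end_commutes up : commutes_with_rot (insert_end up).
Proof.
  intros up' j X H. unfold insert_end, sweep_end. destruct up.
  - rewrite insert_max_0, root_insert_commutes by exact H.
    destruct (rot up' j X); cbn [option_map]; now rewrite ?insert_max_0.
  - rewrite <- insert_bottomE, insert_bottom_commutes by exact H.
    destruct (rot up' j X); cbn [option_map]; now rewrite ?insert_bottomE.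
Qed.

Section Sweeps.
Variable P : tree -> Prop.

Lemma sweep_positions_In up X i :
  In i (sweep_positions P up X) <-> i <= right_depth X /\ P (insert_max i X).
Proof. unfold sweep_positions. rewrite filter_In, positions_In, decide_true. tauto. Qed.

Lemma sweep_positions_sorted up X : StronglySorted (precedes up) (sweep_positions P up X).
Proof. apply StronglySorted_filter, positions_sorted. Qed.

Lemma sweep_positions_head up X : P (insert_end (negb up) X) ->
  exists rest, sweep_positions P up X = sweep_end (negb up) X :: rest.
Proof.
  unfold sweep_positions, insert_end, sweep_end, positions.
  intros H. apply decide_true in H. destruct up; simpl in *.
  - assert (Hd : exists t, downfrom (right_depth X) = right_depth X :: t)
      by (destruct (right_depth X); eexists; reflexivity).
    destruct Hd as [t ->]. simpl. rewrite H. eauto.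
  - rewrite H. eauto.
Qed.

Lemma sweep_In up X Y : In Y (sweep P up X) <->
  exists i, i <= right_depth X /\ Y = insert_max i X /\ P Y.
Proof.
  unfold sweep. rewrite in_map_iff. split.
  - intros [i [<- Hi]]. apply sweep_positions_In in Hi. exists i; tauto.
  - intros [i [Hi [-> HP]]]. exists i. split; [reflexivity|]. now apply sweep_positions_In.
Qed.

Lemma zigzag_In up Xs Y : In Y (zigzag P up Xs) <->
  exists X i, In X Xs /\ i <= right_depth X /\ Y = insert_max i X /\ P Y.
Proof.
  revert up; induction Xs as [|X Xs IH]; intros up; simpl.
  - split; [intros []|intros [X [i [[] _]]]].
  - rewrite in_app_iff, sweep_In, IH. split.
    + intros [[i H]|[X' [i H]]]; [exists X, i|exists X', i]; tauto.
    + intros [X' [i [[<-|H1] H2]]]; [left; exists i; tauto|right; exists X', i; tauto].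
Qed.

Lemma sweep_NoDup up X : NoDup (sweep P up X).
Proof.
  apply NoDup_map_NoDup_ForallPairs.
  - intros x y Hx Hy E. apply sweep_positions_In in Hx, Hy.
    now apply (insert_max_inj x X y X) in E as [-> _]; try tauto.
  - eapply StronglySorted_NoDup; eauto using precedes_irrefl, sweep_positions_sorted.
Qed.

Lemma zigzag_NoDup up Xs : NoDup Xs -> NoDup (zigzag P up Xs).
Proof.
  intros H; revert up; induction H as [|X Xs Hn _ IH]; intros up; simpl; [constructor|].
  apply NoDup_app; auto using sweep_NoDup.
  intros Y H1 H2. apply sweep_In in H1 as [i [Hi [-> _]]].
  apply zigzag_In in H2 as [X' [k [HX' [Hk [E _]]]]].
  apply insert_max_inj in E as [_ <-]; auto.
Qed.

Lemma zigzag_split up Xs A T B : zigzag P up Xs = A ++ T :: B ->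
  exists Xs1 X Xs2 up' S1 S2, Xs = Xs1 ++ X :: Xs2 /\ sweep P up' X = S1 ++ T :: S2 /\
    A = zigzag P up Xs1 ++ S1 /\ B = S2 ++ zigzag P (negb up') Xs2.
Proof.
  revert up A; induction Xs as [|X Xs IH]; intros up A E; simpl in E.
  - destruct A; discriminate.
  - apply app_eq_app in E as [w [[E1 E2]|[E1 E2]]].
    + destruct w as [|T' w].
      * rewrite app_nil_r in E1. subst. simpl in E2.
        destruct (IH (negb up) [] (eq_sym E2))
          as [Xs1 [X' [Xs2 [up' [S1 [S2 [H1 [H2 [H3 H4]]]]]]]]].
        exists (X :: Xs1), X', Xs2, up', S1, S2. simpl. rewrite H1. repeat split; auto.
        now rewrite <- app_assoc, <- H3, app_nil_r.
      * simpl in E2. inversion E2; subst.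
        now exists [], X, Xs, up, A, w.
    + subst A.
      destruct (IH (negb up) w E2) as [Xs1 [X' [Xs2 [up' [S1 [S2 [H1 [H2 [H3 H4]]]]]]]]].
      exists (X :: Xs1), X', Xs2, up', S1, S2. simpl. rewrite H1. repeat split; auto.
      now rewrite H3, app_assoc.
Qed.

End Sweeps.

(** * Zigzag languages *)

Lemma sweep_positions_last P up X I1 i : P (insert_end up X) ->
  sweep_positions P up X = I1 ++ [i] -> i = sweep_end up X.
Proof.
  intros HP E.
  assert (Hin : In (sweep_end up X) (sweep_positions P up X))
    by (apply sweep_positions_In; auto using sweep_end_le).
  destruct (StronglySorted_split _ _ (precedes_irrefl up) (precedes_trans up) _ _ _ _
              (sweep_positions_sorted P up X) E) as [H1 _].
  rewrite E in Hin. apply in_app_or in Hin as [Hin|[<-|[]]]; [|reflexivity].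
  assert (Hi : In i (sweep_positions P up X)) by (rewrite E; apply in_or_app; simpl; auto).
  apply sweep_positions_In in Hi as [Hi _]. apply H1 in Hin as [_ Hp].
  destruct up; simpl in Hp; lia.
Qed.

Section ZigzagLanguage.
Variable L : nat -> tree -> Prop.
Hypothesis L_size : forall n T, L n T -> tsize T = n.
Hypothesis L_remove_max : forall m T, L (S m) T -> L m (remove_max T).
Hypothesis L_insert_root : forall m X, L m X -> L (S m) (insert_max 0 X).
Hypothesis L_insert_bottom : forall m X, L m X -> L (S m) (insert_max (right_depth X) X).
Hypothesis L_Leaf : L 0 Leaf.

Lemma L_insert_end m up Y : L (S m) (insert_end up Y) <-> L m Y.
Proof.
  split; intros H.
  - apply L_remove_max in H. unfold insert_end in H. now rewrite remove_insert_max in H.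
  - unfold insert_end, sweep_end. destruct up; auto.
Qed.

Section OneSweep.
Variables (m : nat) (X : tree) (up : bool) (vis : list tree).
Hypothesis LX : L m X.

Let positions_X := sweep_positions (L (S m)) up X.

Lemma slide_max_from_sweep i d' up' T'' : In i positions_X ->
  slide up' (S m) d' (insert_max i X) = Some T'' ->
  exists k, k <= right_depth X /\ T'' = insert_max k X /\ (if up' then k + d' = i else k = i + d').
Proof.
  intros Hi. rewrite <- (L_size _ _ LX). apply slide_insert_max. now apply sweep_positions_In in Hi.
Qed.

Lemma S_step_inside_sweep I1 i i' I3 :
  positions_X = I1 ++ i :: i' :: I3 ->
  (forall k, In k positions_X -> precedes up k i -> In (insert_max k X) vis) ->
  ~ In (insert_max i' X) vis ->
  forall T', S_step (L (S m)) (insert_max i X) vis T' <-> T' = insert_max i' X.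
Proof.
  intros E Hvis Hnew.
  assert (SS := sweep_positions_sorted (L (S m)) up X).
  destruct (StronglySorted_consecutive _ _ (precedes_irrefl up) (precedes_trans up) _ _ _ _ _ SS E)
    as [Hii' Hgap].
  assert (Hi : In i positions_X) by (rewrite E; apply in_or_app; simpl; auto).
  assert (Hi' : In i' positions_X) by (rewrite E; apply in_or_app; simpl; auto).
  pose proof Hi as [Hir _]%sweep_positions_In. pose proof Hi' as [Hi'r HLi']%sweep_positions_In.
  assert (HsX := L_size _ _ LX).
  apply (S_step_of_max_candidate _ _ _ (S m) up).
  - split; [|exact Hnew]. exists (if up then i - i' else i' - i).
    split; [destruct up; simpl in Hii'; lia|]. split; [|split; [exact HLi'|]].
    + rewrite <- HsX. destruct up; simpl in Hii'.
      * rewrite slide_up_insert_max by exact Hir.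
        destruct (Nat.leb_spec (i - i') i); [|lia]. do 2 f_equal. lia.
      * rewrite slide_down_insert_max by exact Hir.
        destruct (Nat.leb_spec (i + (i' - i)) (right_depth X)); [|lia]. do 2 f_equal. lia.
    + intros d'' T3 Hd'' Sd LT3. destruct (slide_max_from_sweep _ _ _ _ Hi Sd) as [k [Hk [-> Hkk]]].
      apply (Hgap k); [destruct up; simpl in *; lia|destruct up; simpl in *; lia|].
      now apply sweep_positions_In.
  - intros j up' T'' [[d [Hd [Sd _]]] _]. apply slide_range in Sd; [|exact Hd].
    rewrite tsize_insert_max in Sd. lia.
  - intros up' T'' [[d [Hd [Sd [LT _]]]] NI].
    destruct (slide_max_from_sweep _ _ _ _ Hi Sd) as [k [Hk [-> Hkk]]].
    destruct (Bool.bool_dec up' up) as [|ne]; [assumption|]. exfalso. apply NI, Hvis.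
    + now apply sweep_positions_In.
    + destruct up', up; simpl in *; congruence || lia.
Qed.

(* All trees of the sweep being visited, the largest vertex cannot move, and
   rotations of the smaller vertices commute with [insert_end up]. *)
Lemma S_step_end_of_sweep I1 i vis' :
  positions_X = I1 ++ [i] ->
  (forall k, In k positions_X -> In (insert_max k X) vis) ->
  (forall Y, In (insert_end up Y) vis <-> In Y vis') ->
  forall T', S_step (L (S m)) (insert_max i X) vis T' <->
             exists Y, T' = insert_end up Y /\ S_step (L m) X vis' Y.
Proof.
  intros E Hvis Hvis'.
  assert (Hi : In i positions_X) by (rewrite E; apply in_or_app; simpl; auto).
  assert (Hend : i = sweep_end up X)
    by (eapply sweep_positions_last; [apply L_insert_end; exact LX|exact E]).
  assert (HsX := L_size _ _ LX).
  rewrite Hend. fold (insert_end up X).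
  apply (S_step_ext _ _ _ (insert_end_commutes up) (L_insert_end m up) X vis vis' (S m)); auto.
  - unfold insert_end. now rewrite tsize_insert_max, HsX.
  - intros up' T'' [[d [Hd [Sd [LT _]]]] NI].
    unfold insert_end in Sd. rewrite <- Hend in Sd.
    destruct (slide_max_from_sweep _ _ _ _ Hi Sd) as [k [Hk [-> _]]].
    apply NI, Hvis. now apply sweep_positions_In.
Qed.

End OneSweep.

Lemma zigzag_hd m up Xs : (forall Y, In Y Xs -> L m Y) ->
  hd_error (zigzag (L (S m)) up Xs) = option_map (insert_end (negb up)) (hd_error Xs).
Proof.
  intros HXs. destruct Xs as [|Y Xs]; [reflexivity|]. simpl.
  destruct (sweep_positions_head (L (S m)) up Y) as [rest Hr].
  { apply L_insert_end, HXs. now left. }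
  unfold sweep. now rewrite Hr.
Qed.

Section Visited.
Variables (m : nat) (P : list tree) (X : tree) (up : bool) (I1 : list nat) (i : nat).
Hypothesis HP : forall Y, In Y P -> L m Y.
Hypothesis XP : ~ In X P.
Hypothesis Hbefore :
  forall k, In k I1 <-> In k (sweep_positions (L (S m)) up X) /\ precedes up k i.
Hypothesis Hir : i <= right_depth X.

Definition visited : list tree :=
  insert_max i X :: rev (zigzag (L (S m)) true P ++ map (fun k => insert_max k X) I1).

Lemma visited_In Y : In Y visited <-> Y = insert_max i X \/
  (exists X0 k, In X0 P /\ k <= right_depth X0 /\ Y = insert_max k X0 /\ L (S m) Y) \/
  exists k, In k I1 /\ Y = insert_max k X.
Proof.
  unfold visited. simpl. rewrite <- in_rev, in_app_iff, zigzag_In, in_map_iff.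
  split; intros [H|[H|[k [H1 H2]]]];
    solve [left; now symmetry | right; now left | right; right; now exists k].
Qed.

Lemma visited_before_le k : In k I1 -> k <= right_depth X.
Proof. intros Hk. now apply Hbefore, proj1, sweep_positions_In in Hk. Qed.

Lemma visited_insert_max k : k <= right_depth X -> In (insert_max k X) visited ->
  k = i \/ In k I1.
Proof.
  intros Hk [E1|[[X0 [k0 [HX0 [Hk0 [E1 _]]]]]|[k0 [Hk0 E1]]]]%visited_In.
  - left. now apply insert_max_inj in E1 as [-> _].
  - apply insert_max_inj in E1 as [_ ->]; tauto.
  - right. apply insert_max_inj in E1 as [-> _]; auto using visited_before_le.
Qed.

Lemma visited_insert_end : i = sweep_end up X ->
  forall Y, In (insert_end up Y) visited <-> In Y (X :: rev P).
Proof.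
  intros Hend Y. rewrite visited_In. cbn [In]. rewrite <- in_rev. unfold insert_end. split.
  - intros [E1|[[X0 [k0 [HX0 [Hk0 [E1 _]]]]]|[k0 [Hk0 E1]]]].
    + rewrite Hend in E1. left. symmetry. exact (insert_end_inj _ _ _ E1).
    + right. apply insert_max_inj in E1 as [_ ->]; auto using sweep_end_le.
    + left. apply insert_max_inj in E1 as [_ ->]; auto using sweep_end_le, visited_before_le.
  - intros [<-|HY]; [left; now rewrite Hend|].
    right; left. exists Y, (sweep_end up Y). repeat split; auto using sweep_end_le.
    apply L_insert_end, HP, HY.
Qed.

End Visited.

Lemma zigzag_S_step m Xs : generates (L m) Xs (right_path m) ->
  forall A T B, zigzag (L (S m)) true Xs = A ++ T :: B ->
  forall T', S_step (L (S m)) T (T :: rev A) T' <-> hd_error B = Some T'.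
Proof.
  intros [HN [HI [_ HS]]] A T B E T'.
  destruct (zigzag_split _ _ _ _ _ _ E) as [P [X [Q [up [S1 [S2 [HXs [HS' [-> ->]]]]]]]]].
  unfold sweep in HS'. apply map_eq_app in HS' as [I1 [I2' [HIL [<- HS2]]]].
  apply map_eq_cons in HS2 as [i [I2 [-> [<- <-]]]].
  assert (HL : forall Y, In Y (P ++ X :: Q) -> L m Y) by (intros Y; rewrite <- HXs; apply HI).
  assert (XP : ~ In X P).
  { intros H. rewrite HXs in HN. apply (NoDup_remove_2 _ _ _ HN), in_or_app. now left. }
  assert (LX : L m X) by (apply HL, in_or_app; simpl; auto).
  destruct (StronglySorted_split _ _ (precedes_irrefl up) (precedes_trans up) _ _ _ _
              (sweep_positions_sorted (L (S m)) up X) HIL) as [Hbefore Hafter].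
  assert (Hi : In i (sweep_positions (L (S m)) up X))
    by (rewrite HIL; apply in_or_app; simpl; auto).
  assert (Hir : i <= right_depth X) by now apply sweep_positions_In in Hi.
  change (insert_max i X :: rev (zigzag (L (S m)) true P ++ map (fun k => insert_max k X) I1))
    with (visited m P X I1 i).
  destruct I2 as [|i' I3].
  - assert (Hend : i = sweep_end up X)
      by (eapply sweep_positions_last; [apply L_insert_end; exact LX|exact HIL]).
    rewrite (S_step_end_of_sweep m X up _ LX I1 i (X :: rev P) HIL).
    + simpl app. rewrite zigzag_hd, Bool.negb_involutive
        by (intros Y HY; apply HL, in_or_app; simpl; auto).
      split.
      * intros [Y [-> St]]. apply (HS P X Q HXs) in St. now rewrite St.
      * intros H. destruct Q as [|Y Q]; [discriminate|]. injection H as <-.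
        exists Y. split; [reflexivity|]. now apply (HS P X (Y :: Q) HXs).
    + intros k Hk. apply visited_In. rewrite HIL in Hk.
      apply in_app_or in Hk as [Hk|[<-|[]]]; eauto.
    + apply visited_insert_end; auto. intros Y HY. apply HL, in_or_app; auto.
  - assert (Hi' : In i' (sweep_positions (L (S m)) up X))
      by (rewrite HIL; apply in_or_app; simpl; auto).
    rewrite (S_step_inside_sweep m X up _ LX I1 i i' I3 HIL).
    + simpl. split; [intros ->; reflexivity|congruence].
    + intros k Hk Hp. apply visited_In. right; right.
      exists k. split; [now apply Hbefore|reflexivity].
    + intros Hin. apply visited_insert_max with (up := up) in Hin as [->|Hin]; auto.
      * apply (precedes_irrefl up i), Hafter. simpl; auto.
      * apply (precedes_irrefl up i), (precedes_trans up _ i').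
        -- apply Hafter. simpl; auto.
        -- now apply Hbefore.
      * now apply sweep_positions_In in Hi'.
Qed.

Lemma zigzag_list_0 : generates (L 0) [Leaf] (right_path 0).
Proof.
  split; [repeat constructor; intros []|]. split; [|split; [reflexivity|]].
  - intros T. split; [intros [<-|[]]; exact L_Leaf|].
    intros H. apply L_size in H. destruct T; [now left|simpl in H; lia].
  - intros [|a A] T B E T'; [|destruct A; discriminate].
    injection E as <- <-. simpl. split; [|discriminate].
    intros [j [up [[[d [Hd [Sd _]]] _] _]]]. apply slide_range in Sd; [simpl in Sd; lia|exact Hd].
Qed.

Lemma zigzag_generates m Xs : generates (L m) Xs (right_path m) ->
  generates (L (S m)) (zigzag (L (S m)) true Xs) (right_path (S m)).
Proof.
  intros G. pose proof G as [HN [HI [Hhd _]]]. split; [|split; [|split]].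
  - now apply zigzag_NoDup.
  - intros T. rewrite zigzag_In. split.
    + now intros [X [i [_ [_ [_ H]]]]].
    + intros H. assert (NL : T <> Leaf) by (intros ->; apply L_size in H; discriminate).
      destruct (insert_remove_max T NL) as [E1 E2]. exists (remove_max T), (max_depth T).
      repeat split; auto. apply HI. now apply L_remove_max.
  - rewrite zigzag_hd, Hhd by (intros Y; apply HI). simpl. unfold insert_end, sweep_end.
    now rewrite <- insert_bottomE, insert_bottom_right_path.
  - exact (zigzag_S_step m Xs G).
Qed.

Theorem zigzag_list_generates m : generates (L m) (zigzag_list L m) (right_path m).
Proof.
  induction m as [|m IH]; [exact zigzag_list_0|]. exact (zigzag_generates m _ IH).
Qed.

End ZigzagLanguage.

(** * Edges of search trees *)

(* The lemmas on [edges off t] hold at every label offset [off]; at offset 0,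
   [In (a, c, b) (edges 0 T)] is [edge T a c b] and [rt (edge_rel (edges 0 T))]
   is [desc T]. *)
Definition edge_rel (E : list (nat * nat * bool)) (a c : nat) : Prop :=
  exists b, In (a, c, b) E.
Definition right_edge_rel (E : list (nat * nat * bool)) (a c : nat) : Prop :=
  In (a, c, false) E.
Notation rt := (clos_refl_trans nat).

Lemma edges_Node_In off l r e :
  In e (edges off (Node l r)) <->
  (exists a, rootlab off l = Some a /\ e = (off + tsize l + 1, a, true)) \/
  (exists b, rootlab (off + tsize l + 1) r = Some b /\ e = (off + tsize l + 1, b, false)) \/
  In e (edges off l) \/ In e (edges (off + tsize l + 1) r).
Proof.
  cbn [edges]. rewrite !in_app_iff.
  destruct (rootlab off l) as [a|]; destruct (rootlab (off + tsize l + 1) r) as [b|]; simpl;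
  split; intros H; repeat destruct H as [H|H]; subst;
  repeat match goal with
         | H : exists _, _ |- _ => destruct H as [? [? ?]]
         end; try congruence; subst; eauto 10.
  all: try (inversion H; subst; eauto 10).
Qed.

Lemma rootlab_range off t c : rootlab off t = Some c -> off < c <= off + tsize t.
Proof. destruct t; simpl; intros H; inversion H; lia. Qed.

Ltac destruct_edges_Node H :=
  rewrite edges_Node_In in H;
  let a := fresh "a" in let Ha := fresh "Ha" in let He := fresh "He" in
  destruct H as [[a [Ha He]]|[[a [Ha He]]|[H|H]]];
    [inversion He; subst; clear He|inversion He; subst; clear He| |].

Lemma edges_range off t p c b : In (p, c, b) (edges off t) ->
  off < p <= off + tsize t /\ off < c <= off + tsize t /\ (if b then c < p else p < c).
Proof.
  revert off; induction t as [|l IHl r IHr]; intros off H; [destruct H|].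
  destruct_edges_Node H; simpl.
  - apply rootlab_range in Ha. lia.
  - apply rootlab_range in Ha. lia.
  - apply IHl in H. destruct b; lia.
  - apply IHr in H. destruct b; lia.
Qed.

Lemma edge_rel_rt_incl (E E' : list (nat * nat * bool)) u x :
  (forall e, In e E -> In e E') -> rt (edge_rel E) u x -> rt (edge_rel E') u x.
Proof.
  intros S H. induction H; eauto using rt_refl, rt_trans.
  apply rt_step. destruct H as [b H]. exists b; auto.
Qed.

Lemma right_edge_rel_rt_incl (E E' : list (nat * nat * bool)) u x :
  (forall e, In e E -> In e E') -> rt (right_edge_rel E) u x -> rt (right_edge_rel E') u x.
Proof.
  intros S H. induction H; eauto using rt_refl, rt_trans.
  apply rt_step. unfold right_edge_rel in *; auto.
Qed.

Lemma edge_rel_rt_restrict (E E' : list (nat * nat * bool)) lo hi u x :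
  (forall p c b, In (p, c, b) E -> lo < p <= hi -> In (p, c, b) E') ->
  (forall p c b, In (p, c, b) E' -> lo < c <= hi) ->
  lo < u <= hi -> rt (edge_rel E) u x -> rt (edge_rel E') u x /\ lo < x <= hi.
Proof.
  intros H1 H2 Hu H. apply clos_rt_rt1n_iff in H. induction H.
  - split; auto. apply rt_refl.
  - destruct H as [b H]. assert (Hy : In (x, y, b) E') by auto.
    destruct (IHclos_refl_trans_1n ltac:(eapply H2; eauto)) as [R1 R2].
    split; auto. eapply rt_trans; [apply rt_step; exists b; eauto|auto].
Qed.

Lemma edges_Node_incl_l off l r : forall e, In e (edges off l) -> In e (edges off (Node l r)).
Proof. intros e H. apply edges_Node_In. auto. Qed.
Lemma edges_Node_incl_r off l r :
  forall e, In e (edges (off + tsize l + 1) r) -> In e (edges off (Node l r)).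
Proof. intros e H. apply edges_Node_In. auto. Qed.

Lemma desc_in_left_subtree off l r u x : off < u <= off + tsize l ->
  rt (edge_rel (edges off (Node l r))) u x ->
  rt (edge_rel (edges off l)) u x /\ off < x <= off + tsize l.
Proof.
  intros Hu H.
  apply (edge_rel_rt_restrict (edges off (Node l r)) (edges off l) off (off + tsize l) u x);
    [| |exact Hu|exact H].
  - intros p c b He Hp. destruct_edges_Node He; [lia|lia|auto|apply edges_range in He; lia].
  - intros p c b He. apply edges_range in He. lia.
Qed.

Lemma desc_in_right_subtree off l r u x : off + tsize l + 1 < u <= off + tsize (Node l r) ->
  rt (edge_rel (edges off (Node l r))) u x ->
  rt (edge_rel (edges (off + tsize l + 1) r)) u x /\
  off + tsize l + 1 < x <= off + tsize (Node l r).
Proof.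
  intros Hu H.
  apply (edge_rel_rt_restrict (edges off (Node l r)) (edges (off + tsize l + 1) r)
           (off + tsize l + 1) (off + tsize (Node l r)) u x); [| |exact Hu|exact H].
  - intros p c b He Hp. destruct_edges_Node He; simpl in *; try lia; [|exact He].
    apply edges_range in He. lia.
  - intros p c b He. apply edges_range in He. simpl. lia.
Qed.

Lemma edges_desc_side off t p c b x : In (p, c, b) (edges off t) ->
  rt (edge_rel (edges off t)) c x -> if b then x < p else p < x.
Proof.
  revert off p c b; induction t as [|l IHl r IHr]; intros off p c b H Hx; [destruct H|].
  pose proof (edges_range _ _ _ _ _ H) as Rg.
  destruct_edges_Node H.
  - apply rootlab_range in Ha. apply desc_in_left_subtree in Hx; [lia|lia].
  - apply rootlab_range in Ha. apply desc_in_right_subtree in Hx; [lia|simpl; lia].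
  - pose proof (edges_range _ _ _ _ _ H) as R2. apply desc_in_left_subtree in Hx; [|lia].
    eapply IHl; eauto. tauto.
  - pose proof (edges_range _ _ _ _ _ H) as R2. apply desc_in_right_subtree in Hx; [|simpl; lia].
    eapply IHr; eauto. tauto.
Qed.

Lemma rootlab_desc_all off t c x : rootlab off t = Some c -> off < x <= off + tsize t ->
  rt (edge_rel (edges off t)) c x.
Proof.
  revert off c; induction t as [|l IHl r IHr]; intros off c Hc Hx; [discriminate|].
  simpl in Hc. inversion Hc; subst c. simpl in Hx.
  destruct (lt_eq_lt_dec x (off + tsize l + 1)) as [[lt|eq]|gt].
  - destruct l as [|ll lr]; [simpl in *; lia|].
    eapply rt_trans.
    + apply rt_step. exists true. apply edges_Node_In. left. eexists; split; [reflexivity|eauto].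
    + eapply edge_rel_rt_incl; [apply edges_Node_incl_l|]. apply IHl; [reflexivity|lia].
  - subst. apply rt_refl.
  - destruct r as [|rl rr]; [simpl in *; lia|].
    eapply rt_trans.
    + apply rt_step. exists false. apply edges_Node_In.
      right; left. eexists; split; [reflexivity|eauto].
    + eapply edge_rel_rt_incl; [apply edges_Node_incl_r|]. apply IHr; [reflexivity|lia].
Qed.

Lemma edges_child_neq_root off t p c b r :
  In (p, c, b) (edges off t) -> rootlab off t = Some r -> c <> r.
Proof.
  destruct t as [|l r0]; intros H Hr; [destruct H|]. simpl in Hr. inversion Hr; subst r.
  destruct_edges_Node H.
  - apply rootlab_range in Ha. lia.
  - apply rootlab_range in Ha. lia.
  - apply edges_range in H. lia.
  - apply edges_range in H. lia.
Qed.

Lemma edges_parent_unique off t p c b p' b' :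
  In (p, c, b) (edges off t) -> In (p', c, b') (edges off t) -> p = p' /\ b = b'.
Proof.
  revert off; induction t as [|l IHl r IHr]; intros off H H'; [destruct H|].
  pose proof (edges_range _ _ _ _ _ H) as R1. pose proof (edges_range _ _ _ _ _ H') as R2.
  destruct_edges_Node H; destruct_edges_Node H'; try (split; reflexivity);
  repeat match goal with
  | E : rootlab _ _ = Some _ |- _ => pose proof (rootlab_range _ _ _ E); revert E
  end; intros;
  try (match goal with
       | H : In _ (edges _ _) |- _ => pose proof (edges_range _ _ _ _ _ H)
       end);
  try (match goal with
       | H : In _ (edges _ _), H' : In _ (edges _ _) |- _ =>
           pose proof (edges_range _ _ _ _ _ H); pose proof (edges_range _ _ _ _ _ H')
       end);
  try (destruct b; destruct b'; lia); try lia; eauto.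
  - exfalso. eapply edges_child_neq_root; eauto.
  - exfalso. eapply edges_child_neq_root; eauto.
  - exfalso. eapply edges_child_neq_root; eauto.
  - exfalso. eapply edges_child_neq_root; eauto.
Qed.

Lemma edges_child_unique off t p c c' b :
  In (p, c, b) (edges off t) -> In (p, c', b) (edges off t) -> c = c'.
Proof.
  revert off; induction t as [|l IHl r IHr]; intros off H H'; [destruct H|].
  destruct_edges_Node H; destruct_edges_Node H'; try congruence;
  repeat match goal with
  | E : rootlab _ _ = Some _ |- _ => pose proof (rootlab_range _ _ _ E); revert E
  end; intros;
  repeat match goal with
  | H : In _ (edges _ _) |- _ => pose proof (edges_range _ _ _ _ _ H); revert H
  end; intros; try lia; eauto.
Qed.

Lemma below_left_child off t a : off < a < off + tsize t ->
  (forall y, ~ In (a, y, false) (edges off t)) ->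
  exists z d, In (z, d, true) (edges off t) /\ rt (edge_rel (edges off t)) d a.
Proof.
  revert off; induction t as [|l IHl r IHr]; intros off Ha Hn; [simpl in Ha; lia|].
  simpl in Ha.
  destruct (lt_eq_lt_dec a (off + tsize l + 1)) as [[lt|eq]|gt].
  - destruct (Nat.eq_dec a (off + tsize l)) as [e|ne].
    + destruct l as [|ll lr]; [simpl in *; lia|].
      exists (off + tsize (Node ll lr) + 1), (off + tsize ll + 1). split.
      * apply edges_Node_In. left. eexists; split; reflexivity.
      * eapply edge_rel_rt_incl; [apply edges_Node_incl_l|].
        apply rootlab_desc_all; [reflexivity|lia].
    + destruct (IHl off) as [z [d [H1 H2]]]; [lia| |].
      * intros y Hy. apply (Hn y). apply edges_Node_incl_l; auto.
      * exists z, d. split; [apply edges_Node_incl_l; auto|].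
        eapply edge_rel_rt_incl; [apply edges_Node_incl_l|]; auto.
  - subst. destruct r as [|rl rr]; [simpl in *; lia|].
    exfalso. apply (Hn (off + tsize l + 1 + tsize rl + 1)). apply edges_Node_In.
    right; left. eexists; split; reflexivity.
  - destruct (IHr (off + tsize l + 1)) as [z [d [H1 H2]]]; [lia| |].
    * intros y Hy. apply (Hn y). apply edges_Node_incl_r; auto.
    * exists z, d. split; [apply edges_Node_incl_r; auto|].
      eapply edge_rel_rt_incl; [apply edges_Node_incl_r|]; auto.
Qed.

Lemma on_right_branch off t x : off < x <= off + tsize t ->
  (forall z d, In (z, d, true) (edges off t) -> ~ rt (edge_rel (edges off t)) d x) ->
  exists r, rootlab off t = Some r /\ rt (right_edge_rel (edges off t)) r x.
Proof.
  revert off; induction t as [|l IHl r IHr]; intros off Hx Hn; [simpl in Hx; lia|].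
  exists (off + tsize l + 1). split; [reflexivity|]. simpl in Hx.
  destruct (lt_eq_lt_dec x (off + tsize l + 1)) as [[lt|eq]|gt].
  - destruct l as [|ll lr]; [simpl in *; lia|]. exfalso.
    apply (Hn (off + tsize (Node ll lr) + 1) (off + tsize ll + 1)).
    + apply edges_Node_In. left. eexists; split; reflexivity.
    + eapply edge_rel_rt_incl; [apply edges_Node_incl_l|].
      apply rootlab_desc_all; [reflexivity|lia].
  - subst. apply rt_refl.
  - destruct (IHr (off + tsize l + 1)) as [rr [H1 H2]]; [lia| |].
    + intros z d Hz Hd. apply (Hn z d); [apply edges_Node_incl_r; auto|].
      eapply edge_rel_rt_incl; [apply edges_Node_incl_r|]; eauto.
    + eapply rt_trans.
      * apply rt_step. unfold right_edge_rel. apply edges_Node_In.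
        right; left. eexists; split; eauto.
      * eapply right_edge_rel_rt_incl; [apply edges_Node_incl_r|]; eauto.
Qed.

Ltac pair_eq_lia :=
  apply pair_equal_spec; split; [apply pair_equal_spec; split|]; simpl in *; first [reflexivity|lia].

Lemma edges_root_insert off X e : In e (edges off (Node X Leaf)) <->
  In e (edges off X) \/ exists c, rootlab off X = Some c /\ e = (off + tsize X + 1, c, true).
Proof.
  rewrite edges_Node_In. simpl. split.
  - intros [H|[[b [H _]]|[H|[]]]]; auto. discriminate.
  - intros [H|H]; auto.
Qed.

Lemma rootlab_insert_bottom o r : r <> Leaf -> rootlab o (insert_bottom r) = rootlab o r.
Proof. destruct r; [congruence|reflexivity]. Qed.

Lemma edges_insert_bottom off X e : In e (edges off (insert_bottom X)) <->
  In e (edges off X) \/ (X <> Leaf /\ e = (off + tsize X, off + tsize X + 1, false)).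
Proof.
  revert off; induction X as [|l IHl r IHr]; intros off.
  - simpl. split; [intros []|]. intros [[]|[H _]]. congruence.
  - change (insert_bottom (Node l r)) with (Node l (insert_bottom r)). rewrite !edges_Node_In.
    destruct (tree_eq_Leaf_dec r) as [->|NL].
    + simpl. split.
      * intros [H|[[b [Hb He]]|[H|[]]]]; auto.
        right. inversion Hb; subst. split; [discriminate|]. pair_eq_lia.
      * intros [[H|[[b [Hb _]]|[H|[]]]]|[_ He]]; auto; [discriminate|].
        right; left. eexists; split; [reflexivity|]. rewrite He. pair_eq_lia.
    + rewrite rootlab_insert_bottom by auto. rewrite IHr. split.
      * intros [H|[H|[H|[H|[_ He]]]]]; auto.
        right. split; [discriminate|]. rewrite He. simpl. pair_eq_lia.
      * intros [[H|[H|[H|H]]]|[_ He]]; auto.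
        right; right; right; right. split; auto. rewrite He. simpl. pair_eq_lia.
Qed.

Lemma edges_insert_max off X i p c b : In (p, c, b) (edges off X) ->
  In (p, c, b) (edges off (insert_max i X)) \/
  (b = false /\ In (p, off + tsize X + 1, false) (edges off (insert_max i X)) /\
   In (off + tsize X + 1, c, true) (edges off (insert_max i X)) /\
   rt (edge_rel (edges off X)) c (off + tsize X)).
Proof.
  revert off i; induction X as [|l IHl r IHr]; intros off i H; [destruct H|].
  destruct i as [|i'].
  - left. change (insert_max 0 (Node l r)) with (Node (Node l r) Leaf).
    apply edges_root_insert. auto.
  - change (insert_max (S i') (Node l r)) with (Node l (insert_max i' r)).
    rewrite edges_Node_In in H. destruct H as [[a [Ha He]]|[[a [Ha He]]|[H|H]]].
    + left. apply edges_Node_In. left. eauto.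
    + inversion He; subst. clear He.
      destruct r as [|rl rr]; [discriminate|].
      destruct i' as [|i''].
      * right. split; auto. rewrite insert_max_0.
        split; [|split].
        -- apply edges_Node_In. right; left. eexists; split; [reflexivity|]. simpl; pair_eq_lia.
        -- apply edges_Node_In. right; right; right. apply edges_root_insert. right.
           eexists; split; [eauto|]. simpl; pair_eq_lia.
        -- eapply edge_rel_rt_incl; [apply edges_Node_incl_r|].
           apply rootlab_desc_all; eauto. simpl. lia.
      * left. apply edges_Node_In. right; left. eexists; split; [|reflexivity].
        simpl in *. inversion Ha; subst. reflexivity.
    + left. apply edges_Node_In. auto.
    + destruct (IHr (off + tsize l + 1) i' H) as [H1|[H1 [H2 [H3 H4]]]].
      * left. apply edges_Node_In. auto.
      * right. split; auto.
        replace (off + tsize (Node l r) + 1) with (off + tsize l + 1 + tsize r + 1) by (simpl; lia).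
        replace (off + tsize (Node l r)) with (off + tsize l + 1 + tsize r) by (simpl; lia).
        split; [|split].
        -- apply edges_Node_In. auto.
        -- apply edges_Node_In. auto.
        -- eapply edge_rel_rt_incl; [apply edges_Node_incl_r|]; auto.
Qed.


(** * Friendly patterns *)

Lemma rt_last_step (A : Type) (R : relation A) x y :
  clos_refl_trans A R x y -> x <> y -> exists w, clos_refl_trans A R x w /\ R w y.
Proof.
  intros H ne. apply clos_rt_rtn1_iff in H. destruct H as [|w z Hw Hz]; [congruence|].
  exists w. split; [apply clos_rt_rtn1_iff; exact Hz|exact Hw].
Qed.

Lemma edge_range_tsize T a c b : edge T a c b -> 1 <= a <= tsize T /\ 1 <= c <= tsize T.
Proof. intros H. apply edges_range in H. lia. Qed.

Lemma desc_has_parent T z d a b : edge T z d b -> desc T d a -> exists w b', edge T w a b'.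
Proof.
  intros H1 H2. destruct (Nat.eq_dec d a) as [<-|ne]; [eauto|].
  destruct (rt_last_step _ _ _ _ H2 ne) as [w [_ [b' H]]]. eauto.
Qed.

Definition embeds (T : tree) (p : pattern) (f : nat -> nat) : Prop :=
  forall a c b, edge (pat p) a c b ->
    if pe p c then edge T (f a) (f c) b
    else exists d, edge T (f a) d b /\ desc T d (f c).

Ltac destruct_contains H :=
  unfold contains in H; cbv zeta in H; destruct H as [f [Hr [Hinj He]]].

Lemma embeds_edge T p f x y b : embeds T p f -> edge (pat p) x y b ->
  exists d, edge T (f x) d b /\ desc T d (f y).
Proof.
  intros He H. specialize (He _ _ _ H). destruct (pe p y); [|exact He].
  exists (f y). split; [exact He|apply rt_refl].
Qed.

Lemma embeds_desc T p f u w : embeds T p f -> desc (pat p) u w -> desc T (f u) (f w).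
Proof.
  intros He H. induction H as [u w [b H]| |]; [|apply rt_refl|eapply rt_trans; eauto].
  destruct (embeds_edge _ _ _ _ _ _ He H) as [d [H1 H2]].
  eapply rt_trans; [apply rt_step; exists b; exact H1|exact H2].
Qed.

Section FriendlyPattern.
Variable p : pattern.
Hypothesis Fp : friendly p.

Lemma friendly_no_right_child_has_parent a : 1 <= a <= tsize (pat p) ->
  (forall y, ~ edge (pat p) a y false) -> exists x b, edge (pat p) x a b.
Proof.
  intros Ha NoR. destruct Fp as [[[x [b Hx]] _] _].
  destruct (Nat.eq_dec a (tsize (pat p))) as [->|ne]; [eauto|].
  destruct (below_left_child 0 (pat p) a) as [z [d [E1 E2]]]; [lia|exact NoR|].
  exact (desc_has_parent _ _ _ _ _ E1 E2).
Qed.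

Lemma friendly_leaf_below_left_child a : 1 <= a <= tsize (pat p) ->
  (forall y b, ~ edge (pat p) a y b) -> exists z d, edge (pat p) z d true /\ desc (pat p) d a.
Proof.
  intros Ha NoC. destruct Fp as [[_ [c Hc]] _].
  destruct (Nat.eq_dec a (tsize (pat p))) as [->|ne]; [exfalso; exact (NoC c true Hc)|].
  apply (below_left_child 0 (pat p) a); [lia|]. intros y. apply NoC.
Qed.

Lemma friendly_not_contained_in_Leaf : ~ contains Leaf p.
Proof.
  intros H. destruct_contains H. destruct Fp as [[_ [c Hc]] _].
  apply edge_range_tsize in Hc. specialize (Hr 1 ltac:(lia)). simpl in Hr. lia.
Qed.

End FriendlyPattern.

Lemma contains_without_vertex T T' N p f :
  tsize T' = N -> N = S (tsize T) ->
  (forall a c b, edge T' a c b -> a <> N -> c <> N -> edge T a c b) ->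
  (forall u x, u <> N -> x <> N -> desc T' u x -> desc T u x) ->
  (forall a d b x, edge T' a d b -> desc T' d x -> x <> N -> d <> N) ->
  (forall i, 1 <= i <= tsize (pat p) -> 1 <= f i <= N /\ f i <> N) ->
  (forall i j, 1 <= i <= tsize (pat p) -> 1 <= j <= tsize (pat p) -> f i = f j -> i = j) ->
  embeds T' p f -> contains T p.
Proof.
  intros HT' HN Hedge Hdesc Hnot_mid Hr Hinj He. exists f. split; [|split; [exact Hinj|]].
  - intros i Hi. specialize (Hr i Hi). lia.
  - intros a c b E. destruct (edge_range_tsize _ _ _ _ E) as [Ra Rc].
    pose proof (Hr a Ra) as [_ Na]. pose proof (Hr c Rc) as [_ Nc].
    specialize (He _ _ _ E). destruct (pe p c); [now apply Hedge|].
    destruct He as [d [E1 D]]. pose proof (Hnot_mid _ _ _ _ E1 D Nc) as Nd.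
    exists d. split; [now apply Hedge|now apply Hdesc].
Qed.

Lemma root_insert_edge_inv X a c b : edge (Node X Leaf) a c b ->
  edge X a c b \/ (a = S (tsize X) /\ b = true /\ c <= tsize X).
Proof.
  intros E. apply edges_root_insert in E as [E|[c1 [E1 [= -> -> ->]]]]; [now left|].
  apply rootlab_range in E1. right. repeat split; lia.
Qed.

Lemma contains_root_insert_inv p X : friendly p -> contains (Node X Leaf) p -> contains X p.
Proof.
  intros Fp H. destruct_contains H.
  assert (SN : tsize (Node X Leaf) = S (tsize X)) by (simpl; lia).
  set (N := S (tsize X)) in *.
  assert (NP : forall a b, ~ edge (Node X Leaf) a N b).
  { intros a b [E|E]%root_insert_edge_inv; [apply edge_range_tsize in E|]; lia. }
  assert (NR : forall c, ~ edge (Node X Leaf) N c false).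
  { intros c [E|[_ [E _]]]%root_insert_edge_inv; [apply edge_range_tsize in E; lia|discriminate]. }
  assert (DN : forall d, desc (Node X Leaf) d N -> d = N).
  { intros d D. destruct (Nat.eq_dec d N) as [|ne]; [assumption|].
    destruct (rt_last_step _ _ _ _ D ne) as [w [_ [b E]]]. exfalso. eapply NP; eauto. }
  apply (contains_without_vertex X (Node X Leaf) N p f); auto.
  - intros a c b [E|[-> _]]%root_insert_edge_inv Ha Hc; [exact E|now exfalso].
  - intros u x Hu _ D. apply clos_rt_rt1n_iff in D.
    induction D as [|u y x [b E] _ IH]; [apply rt_refl|].
    apply root_insert_edge_inv in E as [E|[-> _]]; [|now exfalso].
    eapply rt_trans; [apply rt_step; exists b; exact E|]. apply IH.
    apply edge_range_tsize in E. lia.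
  - intros a d b x E _ _ ->. eapply NP; eauto.
  - intros i Hi. split; [specialize (Hr i Hi); rewrite SN in Hr; lia|]. intros Hfi.
    destruct (friendly_no_right_child_has_parent p Fp i Hi) as [x [b E]].
    + intros y E. specialize (He _ _ _ E). rewrite Hfi in He. destruct (pe p y).
      * eapply NR; eauto.
      * destruct He as [d [E1 _]]. eapply NR; eauto.
    + specialize (He _ _ _ E). rewrite Hfi in He. destruct (pe p i).
      * eapply NP; eauto.
      * destruct He as [d [E1 E2]]. apply DN in E2 as ->. eapply NP; eauto.
Qed.

Lemma insert_bottom_edge_inv X a c b : edge (insert_bottom X) a c b ->
  edge X a c b \/ (a = tsize X /\ c = S (tsize X) /\ b = false).
Proof.
  intros E. apply edges_insert_bottom in E as [E|[_ [= -> -> ->]]]; [now left|].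
  right. repeat split; lia.
Qed.

Lemma contains_insert_bottom_inv p X : friendly p -> contains (insert_bottom X) p -> contains X p.
Proof.
  intros Fp H. destruct_contains H.
  assert (SN : tsize (insert_bottom X) = S (tsize X))
    by (rewrite insert_bottomE, tsize_insert_max; reflexivity).
  set (N := S (tsize X)) in *.
  assert (NC : forall c b, ~ edge (insert_bottom X) N c b).
  { intros c b [E|E]%insert_bottom_edge_inv; [apply edge_range_tsize in E|]; lia. }
  assert (DN : forall x, desc (insert_bottom X) N x -> x = N).
  { intros x D. apply clos_rt_rt1n_iff in D. destruct D as [|y z [b E] _]; [reflexivity|].
    exfalso; eapply NC; eauto. }
  apply (contains_without_vertex X (insert_bottom X) N p f); auto.
  - intros a c b [E|[_ [-> _]]]%insert_bottom_edge_inv Ha Hc; [exact E|now exfalso].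
  - intros u x _ Hx D. apply clos_rt_rt1n_iff in D.
    induction D as [|u y x [b E] D IH]; [apply rt_refl|].
    apply insert_bottom_edge_inv in E as [E|[_ [-> _]]].
    + eapply rt_trans; [apply rt_step; exists b; exact E|]. now apply IH.
    + exfalso. apply Hx, DN, clos_rt_rt1n_iff, D.
  - intros a d b x _ D Hx ->. exact (Hx (DN x D)).
  - intros i Hi. split; [specialize (Hr i Hi); rewrite SN in Hr; lia|]. intros Hfi.
    destruct (friendly_leaf_below_left_child p Fp i Hi) as [z [d [E1 E2]]].
    + intros y b E. specialize (He _ _ _ E). rewrite Hfi in He. destruct (pe p y).
      * eapply NC; eauto.
      * destruct He as [d [E1 _]]. eapply NC; eauto.
    + destruct (embeds_edge _ _ _ _ _ _ He E1) as [d' [E3 E4]].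
      pose proof (embeds_desc _ _ _ _ _ He E2) as D. rewrite Hfi in D.
      pose proof (edges_desc_side _ _ _ _ _ _ E3 (rt_trans _ _ _ _ _ E4 D)) as Hlt.
      destruct (edge_range_tsize _ _ _ _ E1) as [Rz _]. specialize (Hr z Rz).
      rewrite SN in Hr. simpl in Hlt. unfold N in *. lia.
Qed.

Section InsertMax.
Variables (p : pattern) (X : tree) (i : nat) (f : nat -> nat).
Hypothesis Fp : friendly p.
Hypothesis Hr : forall j, 1 <= j <= tsize (pat p) -> 1 <= f j <= tsize X.
Hypothesis Hinj : forall j j', 1 <= j <= tsize (pat p) -> 1 <= j' <= tsize (pat p) ->
  f j = f j' -> j = j'.
Hypothesis He : embeds X p f.

Let N := S (tsize X).

Lemma edge_insert_max a c b : edge X a c b ->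
  edge (insert_max i X) a c b \/
  (b = false /\ edge (insert_max i X) a N false /\ edge (insert_max i X) N c true /\
   desc X c (tsize X)).
Proof.
  intros E. destruct (edges_insert_max 0 X i a c b E) as [E'|E']; [now left|right].
  unfold N. now replace (S (tsize X)) with (0 + tsize X + 1) by lia.
Qed.

Lemma desc_insert_max u x : desc X u x -> desc (insert_max i X) u x.
Proof.
  induction 1 as [u x [b E]| |]; [|apply rt_refl|eapply rt_trans; eauto].
  apply edge_insert_max in E as [E|[_ [Ea [Eb _]]]]; [apply rt_step; exists b; exact E|].
  eapply rt_trans; apply rt_step; eexists; eauto.
Qed.

Lemma embeds_insert_max_loose x y b : edge (pat p) x y b -> pe p y = false ->
  exists d, edge (insert_max i X) (f x) d b /\ desc (insert_max i X) d (f y).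
Proof.
  intros E Hy. specialize (He _ _ _ E). rewrite Hy in He. destruct He as [d [Ed Dd]].
  apply edge_insert_max in Ed as [Ed|[-> [Ea [Eb _]]]].
  - exists d. split; [exact Ed|now apply desc_insert_max].
  - exists N. split; [exact Ea|].
    eapply rt_trans; [apply rt_step; exists true; exact Eb|now apply desc_insert_max].
Qed.

Section BrokenEdge.
Variables a c : nat.
Hypothesis Eac : edge (pat p) a c false.
Hypothesis Hfac : edge X (f a) (f c) false.
Hypothesis Dc : desc X (f c) (tsize X).

Lemma broken_edge_not_below_left_child z d : edge (pat p) z d true -> ~ desc (pat p) d a.
Proof.
  intros Ez Dd. destruct (embeds_edge _ _ _ _ _ _ He Ez) as [d' [E4 E5]].
  assert (D' : desc X d' (tsize X)).
  { eapply rt_trans; [exact E5|]. eapply rt_trans; [exact (embeds_desc _ _ _ _ _ He Dd)|].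
    eapply rt_trans; [apply rt_step; exists false; exact Hfac|exact Dc]. }
  pose proof (edges_desc_side _ _ _ _ _ _ E4 D') as Hlt. simpl in Hlt.
  destruct (edge_range_tsize _ _ _ _ Ez) as [Rz _]. specialize (Hr z Rz). lia.
Qed.

(* The source of the broken edge lies on the right branch of the root of the
   pattern, so by friendliness (ii) a tight target has no right child, and
   it is not below a left child either: it is the largest vertex. *)
Lemma broken_tight_edge_target : pe p c = true -> c = tsize (pat p).
Proof.
  intros Pc. destruct (edge_range_tsize _ _ _ _ Eac) as [Ra Rc].
  destruct Fp as [_ [Fii _]].
  destruct (on_right_branch 0 (pat p) a) as [r [Hroot Rr]];
    [lia|exact broken_edge_not_below_left_child|].
  assert (NoRc : forall y, ~ edge (pat p) c y false).
  { intros y Ey. enough (pe p c = false) by congruence.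
    apply (Fii r c Hroot).
    - eapply rt_trans; [exact Rr|apply rt_step; exact Eac].
    - eapply edges_child_neq_root; eauto.
    - eauto. }
  destruct (Nat.eq_dec c (tsize (pat p))) as [|ne]; [assumption|exfalso].
  destruct (below_left_child 0 (pat p) c) as [z [d [Ez Dd]]]; [lia|exact NoRc|].
  destruct (Nat.eq_dec d c) as [->|ne2].
  - destruct (edges_parent_unique _ _ _ _ _ _ _ Ez Eac). discriminate.
  - destruct (rt_last_step _ _ _ _ Dd ne2) as [w [Dw [b' Ew]]].
    destruct (edges_parent_unique _ _ _ _ _ _ _ Ew Eac) as [-> _].
    eapply broken_edge_not_below_left_child; eauto.
Qed.

End BrokenEdge.

Let k := tsize (pat p).
Let g (j : nat) : nat := if Nat.eqb j k then N else f j.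

(* When the tight right edge [(a, k)] is broken by [N], mapping [k] to [N]
   instead repairs the embedding. *)
Lemma embeds_insert_max_redirect a : edge (pat p) a k false -> pe p k = true ->
  edge (insert_max i X) (f a) N false -> edge (insert_max i X) N (f k) true ->
  embeds (insert_max i X) p g.
Proof.
  intros Eak Pk EaN ENk x y b E. unfold g.
  destruct (edge_range_tsize _ _ _ _ E) as [Rx Ry].
  destruct (Nat.eqb_spec y k) as [->|ny].
  - destruct (edges_parent_unique _ _ _ _ _ _ _ E Eak) as [-> ->].
    pose proof (edges_range _ _ _ _ _ Eak) as Hak. simpl in Hak.
    rewrite Pk. destruct (Nat.eqb_spec a k); [lia|exact EaN].
  - destruct (Nat.eqb_spec x k) as [->|nx].
    + pose proof (edges_range _ _ _ _ _ E) as Hky. simpl in Hky.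
      destruct b; [|unfold k in *; lia].
      destruct Fp as [_ [_ Fiii]]. rewrite (Fiii y Pk E).
      exists (f k). split; [exact ENk|].
      apply desc_insert_max. destruct (embeds_edge _ _ _ _ _ _ He E) as [d0 [E4 E5]].
      eapply rt_trans; [apply rt_step; exists true; exact E4|exact E5].
    + destruct (pe p y) eqn:Py; [|now apply embeds_insert_max_loose].
      pose proof (He _ _ _ E) as Hxy. rewrite Py in Hxy.
      apply edge_insert_max in Hxy as [Hxy|[-> [Ea [Eb _]]]]; [exact Hxy|exfalso].
      destruct (edges_parent_unique _ _ _ _ _ _ _ Ea EaN) as [Hxa _].
      destruct (edge_range_tsize _ _ _ _ Eak) as [Ra _].
      apply Hinj in Hxa as ->; [|assumption|assumption].
      apply ny, Hinj; [assumption|unfold k; lia|].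
      exact (edges_child_unique _ _ _ _ _ _ Eb ENk).
Qed.

Lemma contains_insert_max_of_embeds : contains (insert_max i X) p.
Proof.
  assert (SN : tsize (insert_max i X) = N) by apply tsize_insert_max.
  destruct (classic (exists a c, edge (pat p) a c false /\ pe p c = true /\
                      ~ edge (insert_max i X) (f a) (f c) false)) as [[a [c [Eac [Pc NE]]]]|NB].
  - pose proof (He _ _ _ Eac) as Hac. rewrite Pc in Hac.
    destruct (edge_insert_max _ _ _ Hac) as [C|[_ [EaN [ENc Dc]]]]; [contradiction|].
    pose proof (broken_tight_edge_target a c Eac Hac Dc Pc) as ->.
    exists g. split; [|split].
    + intros j Hj. rewrite SN. unfold g. specialize (Hr j Hj).
      destruct (Nat.eqb_spec j k); unfold N; lia.
    + intros j j' Hj Hj'. unfold g. pose proof (Hr j Hj). pose proof (Hr j' Hj').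
      destruct (Nat.eqb_spec j k), (Nat.eqb_spec j' k); unfold N; [congruence|lia|lia|].
      now apply Hinj.
    + exact (embeds_insert_max_redirect a Eac Pc EaN ENc).
  - exists f. split; [|split; [exact Hinj|]].
    + intros j Hj. rewrite SN. specialize (Hr j Hj). unfold N. lia.
    + intros x y b E. destruct (pe p y) eqn:Py; [|now apply embeds_insert_max_loose].
      pose proof (He _ _ _ E) as Hxy. rewrite Py in Hxy.
      apply edge_insert_max in Hxy as [Hxy|[-> _]]; [exact Hxy|].
      apply NNPP. intros Nb. apply NB. eauto.
Qed.

End InsertMax.

Lemma contains_insert_max p X i : friendly p -> contains X p -> contains (insert_max i X) p.
Proof.
  intros Fp H. destruct_contains H. exact (contains_insert_max_of_embeds p X i f Fp Hr Hinj He).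
Qed.

Section FriendlyAvoidance.
Variable pats : list pattern.
Hypothesis Fpats : forall p, In p pats -> friendly p.

Lemma Ln_remove_max m T : Ln pats (S m) T -> Ln pats m (remove_max T).
Proof.
  intros [HS HA]. assert (NL : T <> Leaf) by (intros ->; discriminate).
  destruct (insert_remove_max T NL) as [E _]. split.
  - rewrite <- E, tsize_insert_max in HS. lia.
  - intros p Hp Hc. apply (HA p Hp). rewrite <- E. now apply contains_insert_max; auto.
Qed.

Lemma Ln_insert_root m X : Ln pats m X -> Ln pats (S m) (insert_max 0 X).
Proof.
  intros [HS HA]. split; [rewrite tsize_insert_max; lia|].
  intros p Hp Hc. rewrite insert_max_0 in Hc. apply (HA p Hp).
  now apply contains_root_insert_inv; auto.
Qed.

Lemma Ln_insert_bottom m X : Ln pats m X -> Ln pats (S m) (insert_max (right_depth X) X).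
Proof.
  intros [HS HA]. split; [rewrite tsize_insert_max; lia|].
  intros p Hp Hc. rewrite <- insert_bottomE in Hc. apply (HA p Hp).
  now apply contains_insert_bottom_inv; auto.
Qed.

Lemma Ln_Leaf : Ln pats 0 Leaf.
Proof. split; [reflexivity|]. intros p Hp. now apply friendly_not_contained_in_Leaf, Fpats. Qed.

End FriendlyAvoidance.

Theorem theorem3 (pats : list pattern) (n : nat) :
  (forall p, In p pats -> friendly p) ->
  (exists vis, S_complete (Ln pats n) (right_path n) vis) /\
  (forall vis, S_complete (Ln pats n) (right_path n) vis ->
     NoDup vis /\ forall T, In T vis <-> Ln pats n T).
Proof.
  intros Fpats. apply (generates_S_complete _ (zigzag_list (Ln pats) n)).
  apply zigzag_list_generates.
  - now intros m T [HS _].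
  - exact (Ln_remove_max pats Fpats).
  - exact (Ln_insert_root pats Fpats).
  - exact (Ln_insert_bottom pats Fpats).
  - exact (Ln_Leaf pats Fpats).
Qed.
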